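(* Let $\mathcal G$ be an input-output network with input nodes $\iota_1,\dots,\iota_n$ and output node $o$. Partition the remaining nodes into: $\sigma$-nodes (upstream from $o$ and downstream from at least one input node), $d$-nodes (not downstream from any input node), and $u$-nodes (downstream from at least one input node but not upstream from $o$). Consider an admissible system of the form $$\dot x_{\iota_m}=f_{\iota_m}(x_{\iota},x_\sigma,x_d,x_o,\mathcal I)\ (m=1,\dots,n),\quad \dot x_\sigma=f_\sigma(x_\iota,x_\sigma,x_d,x_o),\quad \dot x_u=f_u(x_\iota,x_\sigma,x_u,x_d,x_o),$$ $$\dot x_d=f_d(x_d),\quad \dot x_o=f_o(x_\iota,x_\sigma,x_d,x_o),$$ where $x_\iota=(x_{\iota_1},\dots,x_{\iota_n})$. Suppose $X_0=(x_\iota^*,x_\sigma^*,x_u^*,x_d^*,x_o^* )$ is a linearly stable equilibrium of this system (for some fixed value of $\mathcal I$). Then the core admissible system obtained by freezing $x_d$ at $x_d^*$, $$\dot x_{\iota_m}=f_{\iota_m}(x_\iota,x_\sigma,x_d^*,x_o,\mathcal I),\quad \dot x_\sigma=f_\sigma(x_\iota,x_\sigma,x_d^*,x_o),\quad \dot x_o=f_o(x_\iota,x_\sigma,x_d^*,x_o),$$ has a linearly stable equilibrium at $Y_0=(x_\iota^*,x_\sigma^*,x_o^* )$ (for the same value of $\mathcal I$).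
   Context: A node $b$ is downstream from a node $a$ (and $a$ upstream from $b$) if there is a directed path from $a$ to $b$; every node is upstream and downstream from itself. An admissible system assigns a real variable to each node, is smooth, only the input-node equations depend on the scalar input parameter $\mathcal I$, and $\partial f_j/\partial x_\ell\equiv0$ unless there is an arrow $\ell\to j$. An equilibrium is linearly stable if all eigenvalues of the Jacobian there have negative real part. *)

From HB Require Import structures.
From mathcomp Require Import all_boot all_order all_algebra.
From mathcomp Require Import all_classical all_reals all_analysis.
From mathcomp Require Import complex.
Import Order.TTheory GRing.Theory Num.Theory.

Set Implicit Arguments.
Unset Strict Implicit.
Unset Printing Implicit Defensive.

Local Open Scope ring_scope.

(** * Networks
   A network on [N] nodes (the nodes are ['I_N]) is given by an arrow
   relation [e : rel 'I_N]; [e l j] means there is an arrow [l -> j]. *)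

Definition downstream (N : nat) (e : rel 'I_N) (a b : 'I_N) : bool :=
  connect e a b.

Definition other_node N (ins : {set 'I_N}) (o : 'I_N) (j : 'I_N) : bool :=
  (j \notin ins) && (j != o).

Definition reached_by_input N (e : rel 'I_N) (ins : {set 'I_N}) (j : 'I_N) : bool :=
  [exists i in ins, downstream e i j].

Definition sigma_node N (e : rel 'I_N) (ins : {set 'I_N}) (o j : 'I_N) : bool :=
  other_node ins o j && downstream e j o && reached_by_input e ins j.

Definition d_node N (e : rel 'I_N) (ins : {set 'I_N}) (o j : 'I_N) : bool :=
  other_node ins o j && ~~ reached_by_input e ins j.

Definition u_node N (e : rel 'I_N) (ins : {set 'I_N}) (o j : 'I_N) : bool :=
  other_node ins o j && reached_by_input e ins j && ~~ downstream e j o.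

Definition core_nodes N (e : rel 'I_N) (ins : {set 'I_N}) (o : 'I_N) : {set 'I_N} :=
  [set j | (j \in ins) || sigma_node e ins o j || (j == o)].

(** * Vector fields
   A system on [N] nodes with scalar input parameter is
   [f : 'I_N -> 'rV[R]_N -> R -> R]: [f j x I] is the right-hand side of
   [dx_j/dt] at state [x] and input value [I]. *)

Definition jacobian (R : realType) (N : nat) (f : 'I_N -> 'rV[R]_N -> R -> R)
  (x : 'rV[R]_N) (I : R) : 'M[R]_N :=
  \matrix_(j, l) ('D_(delta_mx 0 l) (fun y : 'rV[R]_N => f j y I) x : R).

Definition equilibrium (R : realType) (N : nat) (f : 'I_N -> 'rV[R]_N -> R -> R)
  (x : 'rV[R]_N) (I : R) : Prop :=
  forall j, f j x I = 0.

Definition complexify (R : realType) (N : nat) (A : 'M[R]_N) : 'M[R[i]]_N :=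
  map_mx (fun r : R => Complex r 0) A.

Definition linearly_stable (R : realType) (N : nat) (f : 'I_N -> 'rV[R]_N -> R -> R)
  (x : 'rV[R]_N) (I : R) : Prop :=
  equilibrium f x I /\
  forall lam : R[i], eigenvalue (complexify (jacobian f x I)) lam -> complex.Re lam < 0.

(** Admissibility of [f] for the network [e] with input nodes [ins].
    "Smooth" is rendered as: differentiable in the state everywhere. *)
Definition admissible (R : realType) (N : nat) (e : rel 'I_N) (ins : {set 'I_N})
  (f : 'I_N -> 'rV[R]_N -> R -> R) : Prop :=
  (forall j I x, differentiable (fun y : 'rV[R]_N => f j y I) x) /\
  (forall j, j \notin ins -> forall x I I', f j x I = f j x I') /\
  (forall j l, l != j -> ~~ e l j ->
     forall x I, 'D_(delta_mx 0 l) (fun y : 'rV[R]_N => f j y I) x = 0).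

(** * The core system obtained by freezing the non-core coordinates
   at those of [X0] (in particular x_d at its equilibrium value). *)
Definition core_ext (R : realType) (N : nat) (C : {set 'I_N}) (X0 : 'rV[R]_N)
  (y : 'rV[R]_#|C|) : 'rV[R]_N :=
  \row_i (match [pick c : 'I_#|C| | enum_val c == i] with
          | Some c => y 0 c
          | None => X0 0 i
          end).

Definition core_system (R : realType) (N : nat) (C : {set 'I_N}) (X0 : 'rV[R]_N)
  (f : 'I_N -> 'rV[R]_N -> R -> R) : 'I_#|C| -> 'rV[R]_#|C| -> R -> R :=
  fun c y I => f (enum_val c) (@core_ext R N C X0 y) I.

Definition core_point (R : realType) (N : nat) (C : {set 'I_N}) (X0 : 'rV[R]_N)
  : 'rV[R]_#|C| :=
  \row_c X0 0 (enum_val c).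

From Pilot Require Import Defs.
From HB Require Import structures.
From mathcomp Require Import all_boot all_order all_algebra.
From mathcomp Require Import all_classical all_reals all_analysis.
From mathcomp Require Import complex.
Import Order.TTheory GRing.Theory Num.Theory.

Set Implicit Arguments.
Unset Strict Implicit.
Unset Printing Implicit Defensive.

Local Open Scope ring_scope.

(* Only the dependency pattern of the equations matters.  List the
   coordinates as d-nodes, core nodes, u-nodes: the d-equations see only
   d-variables and the core equations see no u-variable, so the Jacobian at
   X0 is block lower triangular, and its core diagonal block is the Jacobian
   of the core system at Y0.  The spectrum of a diagonal block of a block
   triangular matrix lies in the spectrum of the whole matrix. *)

Lemma eigenvalue_trmx {F : fieldType} {n} (A : 'M[F]_n) a :
  eigenvalue A^T a = eigenvalue A a.
Proof.
rewrite !eigenvalue_root_char /char_poly -det_tr; congr (root (\det _) a).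
by apply/matrixP => i j; rewrite !mxE eq_sym.
Qed.

Lemma codom_enum_val (T : finType) (A : {pred T}) x :
  (x \in codom (@enum_val T A)) = (x \in A).
Proof.
apply/codomP/idP => [[i ->]|xA]; first exact: enum_valP.
by exists (enum_rank_in xA x); rewrite enum_rankK_in.
Qed.

Section PrincipalSubmatrix.
Variables (F : fieldType) (m n : nat) (h : 'I_m -> 'I_n).
Hypothesis h_inj : injective h.

Lemma eigenvalue_mxsub_rows (A : 'M[F]_n) a :
  (forall i l, l \notin codom h -> A (h i) l = 0) ->
  eigenvalue (mxsub h h A) a -> eigenvalue A a.
Proof.
move=> A0 /eigenvalueP [v vA v_nz].
(* Extend the left eigenvector [v] by zeros. *)
pose P : 'M[F]_(m, n) := \matrix_(k, l) (h k == l)%:R.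
have PA : P *m A = mxsub h h A *m P.
  apply/matrixP => k l; rewrite !mxE (bigD1 (h k)) //= big1 => [|j hkj]; last first.
    by rewrite mxE eq_sym (negPf hkj) mul0r.
  rewrite !mxE eqxx mul1r addr0.
  have [/codomP [j ->] | l_out] := boolP (l \in codom h).
    rewrite (bigD1 j) //= big1 => [|j' j'j]; last first.
      by rewrite !mxE (inj_eq h_inj) (negPf j'j) mulr0.
    by rewrite !mxE eqxx mulr1 addr0.
  rewrite A0 // big1 // => j _; rewrite !mxE.
  have /negPf -> : h j != l by apply: contraNneq l_out => <-; apply: codom_f.
  by rewrite mulr0.
apply/eigenvalueP; exists (v *m P); first by rewrite -mulmxA PA mulmxA vA scalemxAl.
apply: contra v_nz => /eqP vP0; apply/eqP/rowP => j.
have := congr1 (fun w : 'rV_n => w 0 (h j)) vP0; rewrite !mxE.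
rewrite (bigD1 j) //= big1 => [|k kj]; last first.
  by rewrite !mxE (inj_eq h_inj) (negPf kj) mulr0.
by rewrite !mxE eqxx mulr1 addr0.
Qed.

Lemma eigenvalue_mxsub_cols (A : 'M[F]_n) a :
  (forall i l, l \notin codom h -> A l (h i) = 0) ->
  eigenvalue (mxsub h h A) a -> eigenvalue A a.
Proof.
move=> A0; rewrite -eigenvalue_trmx trmx_mxsub -(eigenvalue_trmx A).
by apply: eigenvalue_mxsub_rows => i l /A0; rewrite mxE.
Qed.

End PrincipalSubmatrix.

Lemma eigenvalue_diag_block (F : fieldType) n (A : 'M[F]_n) (C D : {set 'I_n}) a :
  (forall i l, i \in C :|: D -> l \notin C :|: D -> A i l = 0) ->
  (forall i l, i \in D -> l \in C -> A i l = 0) ->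
  eigenvalue (mxsub (enum_val : 'I_#|C| -> 'I_n) enum_val A) a -> eigenvalue A a.
Proof.
set S := C :|: D => S_closed DC0 eigC.
have CS (c : 'I_#|C|) : enum_val c \in S by rewrite finset.in_setU enum_valP.
pose h1 : 'I_#|S| -> 'I_n := enum_val.
pose h2 (c : 'I_#|C|) : 'I_#|S| := enum_rank_in (CS c) (enum_val c).
have h12 c : h1 (h2 c) = enum_val c by rewrite /h1 /h2 enum_rankK_in.
have h2_inj : injective h2 by move=> c c' /(congr1 h1); rewrite !h12 => /enum_val_inj.
apply: (eigenvalue_mxsub_rows (h := h1) enum_val_inj).
  by move=> i l; rewrite codom_enum_val; apply: S_closed; apply: enum_valP.
apply: (eigenvalue_mxsub_cols h2_inj); last by rewrite -mxsub_comp (eq_mxsub _ _ h12 h12).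
move=> i l l_out; rewrite mxE h12; apply: DC0; last exact: enum_valP.
have lC : h1 l \notin C.
  apply: contra l_out => lC; apply/codomP; exists (enum_rank_in lC (h1 l)).
  by have := h12 (enum_rank_in lC (h1 l)); rewrite enum_rankK_in // => /enum_val_inj ->.
by case/setUP: (enum_valP l) lC => [->|].
Qed.

Lemma derive_line_eq (R : numFieldType) (V1 V2 W : normedModType R)
    (g1 : V1 -> W) (g2 : V2 -> W) a1 v1 a2 v2 :
  (forall t : R, g1 (t *: v1 + a1) = g2 (t *: v2 + a2)) ->
  'D_v1 g1 a1 = 'D_v2 g2 a2.
Proof.
move=> g12; have := g12 0; rewrite !scale0r !add0r => g12_0.
rewrite /derive; suff -> : (fun t : R => t^-1 *: ((g1 \o shift a1) (t *: v1) - g1 a1)) =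
    (fun t : R => t^-1 *: ((g2 \o shift a2) (t *: v2) - g2 a2)) by [].
by apply/funext => t; rewrite /= /shift g12 g12_0.
Qed.

Section Jacobian.
Variables (R : realType) (N : nat) (f : 'I_N -> 'rV[R]_N -> R -> R).

Lemma jacobian_eq0 (P : pred 'I_N) (j l : 'I_N) (x : 'rV[R]_N) (I : R) :
  (forall y z : 'rV[R]_N, (forall k, P k -> y 0 k = z 0 k) -> f j y I = f j z I) ->
  ~~ P l -> Defs.jacobian f x I j l = 0.
Proof.
move=> fjP Pl; rewrite mxE.
rewrite (@derive_line_eq _ _ _ _ _ (cst (f j x I)) x _ x (delta_mx 0 l)).
  exact: derive_cst.
move=> t; apply: fjP => k Pk; have /negPf kl : k != l by apply: contraNneq Pl => <-.
by rewrite !mxE kl andbF mulr0 add0r.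
Qed.

Variables (C : {set 'I_N}) (X0 : 'rV[R]_N).

Lemma core_ext_point : core_ext X0 (core_point C X0) = X0.
Proof. by apply/rowP => i; rewrite !mxE; case: pickP => [c /eqP <-|]; rewrite ?mxE. Qed.

Lemma core_ext_line (c : 'I_#|C|) (t : R) :
  core_ext X0 (t *: delta_mx 0 c + core_point C X0) =
  t *: delta_mx 0 (enum_val c) + X0.
Proof.
apply/rowP => i; rewrite !mxE; case: pickP => [c' /eqP <-|none].
  by rewrite !mxE (inj_eq enum_val_inj).
by rewrite eq_sym none mulr0 add0r.
Qed.

Lemma equilibrium_core_system I :
  equilibrium f X0 I -> equilibrium (@core_system R N C X0 f) (core_point C X0) I.
Proof. by move=> fX0 c; rewrite /core_system core_ext_point. Qed.

Lemma jacobian_core_system I :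
  Defs.jacobian (@core_system R N C X0 f) (core_point C X0) I =
  mxsub enum_val enum_val (Defs.jacobian f X0 I).
Proof.
apply/matrixP => c c'; rewrite !mxE.
by apply: derive_line_eq => t; rewrite /core_system core_ext_line.
Qed.

End Jacobian.

Section Nodes.
Variables (N : nat) (e : rel 'I_N) (ins : {set 'I_N}) (o : 'I_N).

Lemma core_node_not_d j : j \in core_nodes e ins o -> ~~ d_node e ins o j.
Proof.
rewrite inE /d_node /sigma_node /other_node.
by case: (j \in ins); case: (j == o); case: (reached_by_input e ins j);
   case: (downstream e j o).
Qed.

Lemma u_node_of_not_core_d j :
  j \notin core_nodes e ins o -> ~~ d_node e ins o j -> u_node e ins o j.
Proof.
rewrite inE /d_node /u_node /sigma_node /other_node.
by case: (j \in ins); case: (j == o); case: (reached_by_input e ins j);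
   case: (downstream e j o).
Qed.

End Nodes.

Theorem lemma3p1 (R : realType) (N : nat) (e : rel 'I_N)
  (ins : {set 'I_N}) (o : 'I_N)
  (f : 'I_N -> 'rV[R]_N -> R -> R) (X0 : 'rV[R]_N) (I0 : R) :
  (0 < #|ins|)%N ->
  o \notin ins ->
  admissible e ins f ->
  (* form of the system: core equations (inputs, sigma, output) do not
     depend on the u-variables *)
  (forall j, j \in core_nodes e ins o ->
     forall (x y : 'rV[R]_N) (I : R), (forall l, ~~ u_node e ins o l -> x 0 l = y 0 l) ->
       f j x I = f j y I) ->
  (* d-equations depend only on the d-variables *)
  (forall j, d_node e ins o j ->
     forall (x y : 'rV[R]_N) (I : R), (forall l, d_node e ins o l -> x 0 l = y 0 l) ->
       f j x I = f j y I) ->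
  linearly_stable f X0 I0 ->
  linearly_stable (@core_system R N (core_nodes e ins o) X0 f)
    (@core_point R N (core_nodes e ins o) X0) I0.
Proof.
move=> _ _ _ core_no_u d_only_d [X0_eq X0_stable].
split; first exact: equilibrium_core_system.
set K := complexify (Defs.jacobian f X0 I0).
have K_eq0 (P : pred 'I_N) (j l : 'I_N) :
    (forall (y z : 'rV[R]_N) I,
       (forall k, P k -> y 0 k = z 0 k) -> f j y I = f j z I) ->
    ~~ P l -> K j l = 0.
  by move=> fjP Pl; rewrite mxE (jacobian_eq0 _ (fun y z => fjP y z I0) Pl).
move=> lam; rewrite jacobian_core_system => lam_core; apply: X0_stable.
apply: (eigenvalue_diag_block (D := [set j | d_node e ins o j])).
- move=> i l; rewrite !finset.in_setU negb_or => iCD /andP [lC]; rewrite inE => ld.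
  case/orP: iCD => [iC|]; last rewrite inE => id.
    apply: (K_eq0 (fun k => ~~ u_node e ins o k) _ _ (core_no_u _ iC)).
    exact/negPn/(u_node_of_not_core_d lC ld).
  exact: (K_eq0 (d_node e ins o) _ _ (d_only_d _ id)).
- move=> i l; rewrite inE => id lC.
  exact: (K_eq0 (d_node e ins o) _ _ (d_only_d _ id) (core_node_not_d lC)).
- by rewrite /K /complexify -map_mxsub; exact: lam_core.
Qed.
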